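(* Consider the P-SSD algorithm described in the context, executed over an arbitrary, possibly time-varying, sequence of digraphs. Then for each agent $i\in\{1,\dots,M\}$: (a) for all $k\in\mathbb{N}_0$, $C_k^i$ is either zero or has full column rank; (b) for all $k\in\mathbb{N}$, $\mathcal{R}(D_k^iE_k^i)=\mathcal{R}(C_k^i)$; (c) for all $k\in\mathbb{N}$, $\mathcal{R}(D(X_i)C_k^i)=\mathcal{R}(D(Y_i)C_k^i)$.
   Context: Data setting: a map $T:\mathcal{M}\to\mathcal{M}$, $\mathcal{M}\subseteq\mathbb{R}^n$; a dictionary $D(x)=[d_1(x),\dots,d_{N_d}(x)]$ of real-valued functions on $\mathcal{M}$; data matrices $X,Y\in\mathbb{R}^{N\times n}$ whose $i$-th rows $x_i^T,y_i^T$ satisfy $y_i=T(x_i)$; $D(X)\in\mathbb{R}^{N\times N_d}$ is the matrix with rows $D(x_1),\dots,D(x_N)$ (similarly $D(Y)$). Assumption: $D(X)$ and $D(Y)$ have full column rank. There are $M$ agents; agent $i$ holds local dictionary snapshots $D(X_i),D(Y_i)$ (obtained from a subset of the snapshot pairs) such that the union over $i$ of the rows of $[D(X_i),D(Y_i)]$ equals the set of rows of $[D(X),D(Y)]$. There are signature matrices $D(X_s),D(Y_s)$ with full column rank such that the rows of $[D(X_s),D(Y_s)]$ are contained in the rows of $[D(X_i),D(Y_i)]$ for every $i$. SSD algorithm: given $A,B\in\mathbb{R}^{m\times q}$, set $A_1=A$, $B_1=B$, $C=I_q$, and iterate: let $[Z^A_j;Z^B_j]$ be a matrix whose columns form a basis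 of the null space of $[A_j,B_j]$ (with $Z^A_j$ having as many rows as $A_j$ has columns); if the null space is trivial return $0$; if the number of rows of $Z^A_j$ is at most its number of columns, return $C$; otherwise set $C\leftarrow CZ^A_j$, $A_{j+1}=A_jZ^A_j$, $B_{j+1}=B_jZ^A_j$. Its output is denoted $\mathrm{SSD}(A,B)$. P-SSD algorithm: at iteration $k\ge1$ the digraph $G_k$ is used; an edge $(j,i)\in E_k$ means $j$ is an in-neighbor of $i$, and $\mathcal{N}_{\mathrm{in}}^k(i)$ denotes the in-neighbors of $i$ in $G_k$. Each agent $i$ sets $C_0^i=I_{N_d}$, $\mathrm{flag}_0^i=0$, and for $k=1,2,\dots$: receives $C_{k-1}^j$ for $j\in\mathcal{N}_{\mathrm{in}}^k(i)$; sets $D_k^i=\mathrm{basis}\big(\bigcap_{j\in\{i\}\cup\mathcal{N}_{\mathrm{in}}^k(i)}\mathcal{R}(C_{k-1}^j)\big)$; sets $E_k^i=\mathrm{SSD}(D(X_i)D_k^i,D(Y_i)D_k^i)$; if the number of columns of $D_k^iE_k^i$ is strictly less than that of $C_{k-1}^i$, sets $C_k^i=D_k^iE_k^i$ and $\mathrm{flag}_k^i=0$; otherwise sets $C_k^i=C_{k-1}^i$ and $\mathrm{flag}_k^i=1$; then transmits $C_k^i$ to its out-neighbors. Here $\mathrm{basis}(\mathcal{A})$ returns a matrix whose columns form a basis of the subspace $\mathcal{A}$, and returns $0$ if $\mathcal{A}=\{0\}$; the matrix $0$ is regarded as having $0$ columns. $\mathcal{R}(\cdot)$ denotes range space. *)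

(* Column spaces R(A) are represented by row spaces of A^T. *)
From HB Require Import structures.
From mathcomp Require Import all_boot all_order all_algebra.
Set Implicit Arguments.
Unset Strict Implicit.
Unset Printing Implicit Defensive.
Import GRing.Theory.
Local Open Scope ring_scope.

(* A matrix with n rows and an arbitrary (variable) number of columns.
   The "matrix 0 regarded as having 0 columns" is (existT _ 0 0). *)
Definition cmx (R : fieldType) (n : nat) := {c : nat & 'M[R]_(n, c)}.

(* The columns of B (n x c) form a basis of the subspace whose elements are
   (transposes of) the rows of V : 'M_n, i.e. R(B) = V and B has full column rank. *)
Definition is_basis_of (R : fieldType) (n c : nat) (V : 'M[R]_n) (B : 'M[R]_(n, c)) : Prop :=
  (B^T == V)%MS /\ \rank B = c.

Definition range_eq (R : fieldType) (m p q : nat) (A : 'M[R]_(m, p)) (B : 'M[R]_(m, q)) : Prop :=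
  (A^T == B^T)%MS.

(* Null space of K : 'M_(m,p) as a row space: kermx K^T = { u | K *m u^T = 0 }. *)
Definition nullsp (R : fieldType) (m p : nat) (K : 'M[R]_(m, p)) : 'M[R]_p := kermx K^T.

(* Relational description of the SSD algorithm (any choice of null-space bases).
   ssd_from A_j B_j C out : starting from the state (A_j, B_j, C) the algorithm
   may return out.  Z = [Z^A; Z^B] has qj + qj rows; Z^A = usubmx Z. *)
Inductive ssd_from (R : fieldType) (m q : nat) :
    forall qj : nat, 'M[R]_(m, qj) -> 'M[R]_(m, qj) -> 'M[R]_(q, qj) -> cmx R q -> Prop :=
| SSD_zero qj (A B : 'M[R]_(m, qj)) (C : 'M[R]_(q, qj)) (Z : 'M[R]_(qj + qj, 0)) :
    is_basis_of (nullsp (row_mx A B)) Z ->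
    ssd_from A B C (existT (fun c => 'M[R]_(q, c)) 0%N 0)
| SSD_ret qj (A B : 'M[R]_(m, qj)) (C : 'M[R]_(q, qj)) r (Z : 'M[R]_(qj + qj, r)) :
    is_basis_of (nullsp (row_mx A B)) Z -> (0 < r)%N -> (qj <= r)%N ->
    ssd_from A B C (existT (fun c => 'M[R]_(q, c)) qj C)
| SSD_step qj (A B : 'M[R]_(m, qj)) (C : 'M[R]_(q, qj)) r (Z : 'M[R]_(qj + qj, r)) out :
    is_basis_of (nullsp (row_mx A B)) Z -> (0 < r)%N -> (r < qj)%N ->
    ssd_from (A *m usubmx Z) (B *m usubmx Z) (C *m usubmx Z) out ->
    ssd_from A B C out.

Definition ssd (R : fieldType) (m q : nat) (A B : 'M[R]_(m, q)) (out : cmx R q) : Prop :=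
  ssd_from A B (1%:M : 'M[R]_q) out.

(* An execution of P-SSD over the digraph sequence G (G k j i <-> (j,i) in E_k,
   i.e. j is an in-neighbour of i at iteration k), with local dictionary
   snapshots DXl i = D(X_i), DYl i = D(Y_i).  Cm k i = C_k^i, Dm k i = D_k^i,
   Em k i = E_k^i, flag k i = flag_k^i; iteration k.+1 uses G (k.+1). *)
Definition pssd_exec (R : fieldType) (M Nd : nat) (Nl : 'I_M -> nat)
    (DXl DYl : forall i : 'I_M, 'M[R]_(Nl i, Nd)) (G : nat -> rel 'I_M)
    (Cm Dm : nat -> 'I_M -> cmx R Nd)
    (Em : forall (k : nat) (i : 'I_M), cmx R (tag (Dm k i)))
    (flag : nat -> 'I_M -> bool) : Prop :=
  forall i : 'I_M,
    [/\ Cm 0%N i = existT (fun c => 'M[R]_(Nd, c)) Nd 1%:M,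
        flag 0%N i = false &
        forall k : nat,
          [/\ is_basis_of
                (\bigcap_(j | (j == i) || G k.+1 j i) <<(tagged (Cm k j))^T>>)%MS
                (tagged (Dm k.+1 i)),
              ssd (DXl i *m tagged (Dm k.+1 i)) (DYl i *m tagged (Dm k.+1 i)) (Em k.+1 i) &
              if (tag (Em k.+1 i) < tag (Cm k i))%N then
                Cm k.+1 i = existT (fun c => 'M[R]_(Nd, c)) (tag (Em k.+1 i))
                              (tagged (Dm k.+1 i) *m tagged (Em k.+1 i))
                /\ flag k.+1 i = false
              else Cm k.+1 i = Cm k i /\ flag k.+1 i = true]].

Arguments pssd_exec {R M Nd Nl} DXl DYl G Cm Dm Em flag.

(* The rows of the signature matrices occur in every local snapshot, so D(X_i)
   and D(Y_i) have full column rank (in MathComp terms: are row_full).  Along an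
   SSD run on A_j = A C_j, B_j = B C_j with A_j, B_j of full column rank, the
   upper block Z^A of a basis Z of the null space of [A_j, B_j] again has full
   column rank, because Z^B = -L A_j Z^A for a left inverse L of B_j; hence the
   invariant persists.  The run stops when the null space has dimension at least
   q_j, i.e. rank [A_j, B_j] <= q_j, which forces R(A_j) = R(B_j).  In P-SSD an
   update of C_k^i is rejected only when D_k^i E_k^i has at least as many columns
   as C_(k-1)^i, while R(D_k^i E_k^i) lies in R(D_k^i), which lies in
   R(C_(k-1)^i); comparing ranks gives (b), and (c) follows from (b) and the SSD
   property of E_k^i. *)

From HB Require Import structures.
From mathcomp Require Import all_boot all_order all_algebra.
Import GRing.Theory.
Local Open Scope ring_scope.

Set Implicit Arguments.
Unset Strict Implicit.
Unset Printing Implicit Defensive.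

Section MatrixRanges.

Variable F : fieldType.

Lemma submx_rank_eqmx m1 m2 n (A : 'M[F]_(m1, n)) (B : 'M[F]_(m2, n)) :
  (A <= B)%MS -> (\rank B <= \rank A)%N -> (A == B)%MS.
Proof.
move=> sAB leBA; have [_ <-] := mxrank_leqif_eq sAB.
by rewrite eqn_leq mxrankS.
Qed.

Lemma row_full_sub m1 m2 n (A : 'M[F]_(m1, n)) (B : 'M[F]_(m2, n)) :
  (A <= B)%MS -> row_full A -> row_full B.
Proof. by move=> sAB; rewrite -!col_leq_rank => /leq_trans; apply; exact: mxrankS. Qed.

Lemma row_full_of_row_sub m1 m2 n (S : 'M[F]_(m1, n)) (A : 'M[F]_(m2, n)) :
  (forall j, exists l, row j S = row l A) -> row_full S -> row_full A.
Proof.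
move=> rowsS; apply: row_full_sub; apply/row_subP=> j.
by have [l ->] := rowsS j; exact: row_sub.
Qed.

Lemma row_full_mulmx m n p (A : 'M[F]_(m, n)) (B : 'M[F]_(n, p)) :
  row_full A -> row_full B -> row_full (A *m B).
Proof. by move=> fA; rewrite /row_full eqmxMfull. Qed.

Lemma row_full_mulmx_r m n p (A : 'M[F]_(m, n)) (B : 'M[F]_(n, p)) :
  row_full (A *m B) -> row_full B.
Proof. by rewrite -!col_leq_rank => /leq_trans; apply; exact: mxrankM_maxr. Qed.

Lemma row_full_basis n c (V : 'M[F]_n) (B : 'M[F]_(n, c)) :
  is_basis_of V B -> row_full B.
Proof. by case=> _ rB; apply/eqP. Qed.

Lemma range_eq_refl m p (A : 'M[F]_(m, p)) : range_eq A A.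
Proof. exact/eqmxP. Qed.

Lemma range_eq_sym m p q (A : 'M[F]_(m, p)) (B : 'M[F]_(m, q)) :
  range_eq A B -> range_eq B A.
Proof. by move/eqmxP/eqmx_sym/eqmxP. Qed.

Lemma range_eq_trans m p q s (A : 'M[F]_(m, p)) (B : 'M[F]_(m, q)) (C : 'M[F]_(m, s)) :
  range_eq A B -> range_eq B C -> range_eq A C.
Proof. by move/eqmxP=> eAB /eqmxP eBC; apply/eqmxP/(eqmx_trans eAB). Qed.

Lemma range_eqMl n m p q (P : 'M[F]_(n, m)) (A : 'M[F]_(m, p)) (B : 'M[F]_(m, q)) :
  range_eq A B -> range_eq (P *m A) (P *m B).
Proof. by move/eqmxP=> eAB; apply/eqmxP; rewrite !trmx_mul; exact: eqmxMr. Qed.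

End MatrixRanges.

Section NullBasis.

Variables (F : fieldType) (m q r : nat) (A B : 'M[F]_(m, q)).
Variable Z : 'M[F]_(q + q, r).
Hypothesis basisZ : is_basis_of (nullsp (row_mx A B)) Z.

Lemma null_basis_mul : A *m usubmx Z + B *m dsubmx Z = 0.
Proof.
rewrite -mul_row_col vsubmxK; apply/trmx_inj; rewrite trmx_mul trmx0.
by apply/sub_kermxP; case: basisZ => /eqmxP <- _; exact: submx_refl.
Qed.

Lemma mxrank_row_mx_null_basis : \rank (row_mx A B) = (q + q - r)%N.
Proof.
case: basisZ => /eqmx_rank; rewrite mxrank_tr /nullsp mxrank_ker mxrank_tr => rkZ <-.
by rewrite rkZ subKn // rank_leq_col.
Qed.

Lemma null_basis_range_eq : row_full A -> row_full B -> (q <= r)%N -> range_eq A B.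
Proof.
move=> fA fB leqr.
have rkAB : (\rank (col_mx A^T B^T) <= q)%N.
  rewrite -tr_row_mx mxrank_tr mxrank_row_mx_null_basis leq_subLR.
  by rewrite leq_add2r.
have eA : (A^T == col_mx A^T B^T)%MS.
  by apply: submx_rank_eqmx; rewrite ?mxrank_tr ?(eqP fA) // -addsmxE addsmxSl.
have eB : (B^T == col_mx A^T B^T)%MS.
  by apply: submx_rank_eqmx; rewrite ?mxrank_tr ?(eqP fB) // -addsmxE addsmxSr.
by apply/eqmxP/(eqmx_trans (eqmxP eA))/eqmx_sym/eqmxP.
Qed.

Lemma row_full_usubmx_null_basis : row_full B -> row_full (usubmx Z).
Proof.
case/row_fullP=> L LB1.
have eZ : Z = col_mx 1%:M (- (L *m A)) *m usubmx Z.
  rewrite mul_col_mx mul1mx mulNmx -mulmxA.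
  have /(congr1 (mulmx L)) := null_basis_mul.
  rewrite mulmx0 mulmxDr !mulmxA LB1 mul1mx => /eqP; rewrite addr_eq0 => /eqP ->.
  by rewrite opprK vsubmxK.
apply: (@row_full_mulmx_r _ _ _ _ (col_mx 1%:M (- (L *m A)))).
by rewrite -eZ; exact: row_full_basis basisZ.
Qed.

End NullBasis.

Section SSD.

Variables (F : fieldType) (m q : nat) (A0 B0 : 'M[F]_(m, q)).

Lemma ssd_from_spec qj (A B : 'M[F]_(m, qj)) (C : 'M[F]_(q, qj)) out :
  ssd_from A B C out -> A = A0 *m C -> B = B0 *m C -> row_full A -> row_full B ->
  row_full (tagged out) /\ range_eq (A0 *m tagged out) (B0 *m tagged out).
Proof.
elim=> {qj A B C out} /=.
- move=> qj A B C Z _ _ _ _ _; split; first by rewrite /row_full -leqn0 rank_leq_col.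
  by rewrite !mulmx0; exact: range_eq_refl.
- move=> qj A B C r Z basisZ _ leqr eA eB fA fB.
  split; first by apply: (@row_full_mulmx_r _ _ _ _ A0); rewrite -eA.
  by rewrite -eA -eB; exact: null_basis_range_eq basisZ fA fB leqr.
- move=> qj A B C r Z out basisZ _ _ _ IH eA eB fA fB.
  have fZA := row_full_usubmx_null_basis basisZ fB.
  apply: IH; [by rewrite eA mulmxA | by rewrite eB mulmxA | exact: row_full_mulmx ..].
Qed.

End SSD.

Lemma ssd_spec (F : fieldType) m q (A B : 'M[F]_(m, q)) out :
  ssd A B out -> row_full A -> row_full B ->
  row_full (tagged out) /\ range_eq (A *m tagged out) (B *m tagged out).
Proof. by move/ssd_from_spec; apply; rewrite mulmx1. Qed.

Section PSSD.

Variables (F : fieldType) (M Nd : nat) (Nl : 'I_M -> nat).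
Variables (DXl DYl : forall i : 'I_M, 'M[F]_(Nl i, Nd)) (G : nat -> rel 'I_M).
Variables (Cm Dm : nat -> 'I_M -> cmx F Nd).
Variable Em : forall (k : nat) (i : 'I_M), cmx F (tag (Dm k i)).
Variable flag : nat -> 'I_M -> bool.
Hypothesis exec : pssd_exec DXl DYl G Cm Dm Em flag.

Variable i : 'I_M.
Hypotheses (fXl : row_full (DXl i)) (fYl : row_full (DYl i)).

Local Notation C k := (tagged (Cm k i)).
Local Notation D k := (tagged (Dm k i)).
Local Notation E k := (tagged (Em k i)).

Lemma pssd_D_full k : row_full (D k.+1).
Proof. by have [_ _ /(_ k) [/row_full_basis]] := exec i. Qed.

Lemma pssd_E_spec k :
  row_full (E k.+1) /\ range_eq (DXl i *m D k.+1 *m E k.+1) (DYl i *m D k.+1 *m E k.+1).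
Proof.
have [_ _ /(_ k) [_ ssdE _]] := exec i.
by apply: ssd_spec ssdE _ _; apply: row_full_mulmx (pssd_D_full k).
Qed.

Lemma pssd_DE_full k : row_full (D k.+1 *m E k.+1).
Proof. by rewrite row_full_mulmx ?pssd_D_full ?(proj1 (pssd_E_spec k)). Qed.

Lemma pssd_C_full k : row_full (C k).
Proof.
have [C0 _ step] := exec i; elim: k => [|k IHk]; first by rewrite C0 /row_full mxrank1.
have [_ _] := step k; case: ifP => _ [-> _] //=; exact: pssd_DE_full.
Qed.

Lemma pssd_range_DE k : range_eq (D k.+1 *m E k.+1) (C k.+1).
Proof.
have [_ _ /(_ k) [[basisD _] _]] := exec i.
case: ifP => notlt [-> _] /=; first exact: range_eq_refl.
apply: submx_rank_eqmx.
  rewrite trmx_mul; apply: submx_trans (submxMl _ _) _; rewrite (eqmxP basisD).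
  by apply: (bigcapmx_inf i); rewrite ?eqxx ?genmxE.
rewrite !mxrank_tr (eqP (pssd_C_full k)) (eqP (pssd_DE_full k)).
by rewrite leqNgt notlt.
Qed.

Lemma pssd_range_XY k : range_eq (DXl i *m C k.+1) (DYl i *m C k.+1).
Proof.
have eDE := pssd_range_DE k; have [_ eXY] := pssd_E_spec k.
apply: range_eq_trans (range_eq_sym (range_eqMl (DXl i) eDE)) _.
rewrite mulmxA; apply: range_eq_trans eXY _; rewrite -mulmxA.
exact: range_eqMl.
Qed.

End PSSD.

Theorem theorem4p5 (R : realFieldType) (M N Nd Ns : nat)
    (DX DY : 'M[R]_(N, Nd))
    (Nl : 'I_M -> nat) (DXl DYl : forall i : 'I_M, 'M[R]_(Nl i, Nd))
    (DXs DYs : 'M[R]_(Ns, Nd))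
    (G : nat -> rel 'I_M)
    (Cm Dm : nat -> 'I_M -> cmx R Nd)
    (Em : forall (k : nat) (i : 'I_M), cmx R (tag (Dm k i)))
    (flag : nat -> 'I_M -> bool) :
  (* D(X) and D(Y) have full column rank *)
  \rank DX = Nd -> \rank DY = Nd ->
  (* every row of [D(X_i), D(Y_i)] is a row of [D(X), D(Y)] ... *)
  (forall (i : 'I_M) (j : 'I_(Nl i)), exists l : 'I_N,
      row j (DXl i) = row l DX /\ row j (DYl i) = row l DY) ->
  (* ... and every row of [D(X), D(Y)] is a row of some [D(X_i), D(Y_i)] *)
  (forall l : 'I_N, exists (i : 'I_M) (j : 'I_(Nl i)),
      row j (DXl i) = row l DX /\ row j (DYl i) = row l DY) ->
  (* signature matrices: full column rank, rows contained in every agent's data *)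
  \rank DXs = Nd -> \rank DYs = Nd ->
  (forall (i : 'I_M) (j : 'I_Ns), exists l : 'I_(Nl i),
      row j DXs = row l (DXl i) /\ row j DYs = row l (DYl i)) ->
  pssd_exec DXl DYl G Cm Dm Em flag ->
  forall i : 'I_M,
    [/\ (forall k : nat, tagged (Cm k i) = 0 \/ \rank (tagged (Cm k i)) = tag (Cm k i)),
        (forall k : nat, (0 < k)%N ->
           range_eq (tagged (Dm k i) *m tagged (Em k i)) (tagged (Cm k i))) &
        (forall k : nat, (0 < k)%N ->
           range_eq (DXl i *m tagged (Cm k i)) (DYl i *m tagged (Cm k i)))].
Proof.
move=> _ _ _ _ rXs rYs sig exec i.
have fXl : row_full (DXl i).
  apply: (@row_full_of_row_sub _ _ _ _ DXs); last exact/eqP.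
  by move=> j; have [l [eX _]] := sig i j; exists l.
have fYl : row_full (DYl i).
  apply: (@row_full_of_row_sub _ _ _ _ DYs); last exact/eqP.
  by move=> j; have [l [_ eY]] := sig i j; exists l.
split=> [k | [|k] // _ | [|k] // _].
- by right; apply/eqP; exact (pssd_C_full exec fXl fYl k).
- exact (pssd_range_DE exec fXl fYl k).
- exact (pssd_range_XY exec fXl fYl k).
Qed.
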